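(* Let $U$ be a countably infinite universe, $\mathcal{C}=(L_1,L_2,\ldots)$ a countably infinite collection of languages over $U$, $\mathcal{A}=\{A_g\}_{g\in[K]}$ a partition of $U$ into finitely many groups, $\alpha\in[0,1]$, and consider the Representative Procedure in the context. For every $i\ge1$ and every $t\ge i$, let $k$ be the position of the entry $L_i$ in $\mathcal{C}'_t=(L'_1,\ldots,L'_t)$ at the end of iteration $t$. Then $T(L_i)$ is a set of maximum size among all sets $T$ satisfying: $T$ is finite, and there exists a subcollection $\mathcal{D}$ of the entries $(L'_1,\ldots,L'_k)$ that includes $L'_k$, such that every $L\in\mathcal{D}$ contains $T$ and $T$ suffers group scarcity with respect to $\mathcal{D}$ and $\mathcal{A}$.
   Context: A language is an infinite subset of $U$; a collection is a sequence of languages (repetitions allowed, entries distinguished by index). For a finite nonempty $T\subseteq U$, $\mathrm{emp}_T$ is the uniform distribution on $T$, and for a distribution $D$ on $U$, $D^{\mathcal{A}}(g)=\Pr_{x\sim D}[x\in A_g]$. Scarce groups: for a collection $\mathcal{D}$ of languages and finite $T$, let $B=\{g\in[K]: A_g\cap((\bigcap_{L\in\mathcal{D}}L)\setminus T)=\emptyset\}$; $T$ suffers group scarcity w.r.t. $\mathcal{D}$ and $\mathcal{A}$ if some $g\in B$ has $\mathrm{emp}_T^{\mathcal{A}}(g)>\alpha$, or $\sum_{g\in B}\mathrm{emp}_T^{\mathcal{A}}(g)>\alpha(K-|B|)$. Representative Procedure. Set $\mathcal{C}'_0=()$. For $i=1,2,\ldots$: append $L_i$ to the end of $\mathcal{C}'_{i-1}$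 to get $\mathcal{C}'_i=(L'_1,\ldots,L'_i)$, set $j=i$. Repeat: (i) let $T$ be a finite (nonempty) set of largest size for which there is a subcollection $\mathcal{D}$ of the entries $(L'_1,\ldots,L'_j)$ including $L'_j$ with $T\subseteq L$ for all $L\in\mathcal{D}$ and $T$ suffering group scarcity w.r.t. $\mathcal{D}$ and $\mathcal{A}$; let $\mathcal{C}_{\mathrm{chk}}$ be such a $\mathcal{D}$ and $m_{\mathrm{chk}}=|T|$ ($0$ if none exists). (ii) If $j\le1$ or $m_{\mathrm{chk}}>m^\star_\alpha(L'_{j-1})$, stop. (iii) Otherwise swap the entries at positions $j-1,j$ in $\mathcal{C}'_i$, set $j\leftarrow j-1$, return to (i). On stopping, set $T(L_i)=T$, $\mathcal{C}(L_i)=\mathcal{C}_{\mathrm{chk}}$, $m^\star_\alpha(L_i)=m_{\mathrm{chk}}$; the ordering $\mathcal{C}'_t$ at the end of iteration $t$ is the one obtained when the loop of iteration $t$ stops. *)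

From HB Require Import structures.
From mathcomp Require Import all_boot all_order all_algebra.
From mathcomp Require Import finmap.
From mathcomp Require Import boolp reals.
Set Implicit Arguments. Unset Strict Implicit. Unset Printing Implicit Defensive.
Import Order.TTheory GRing.Theory Num.Theory.
Local Open Scope ring_scope.
Local Open Scope fset_scope.

Definition lang (U : Type) := U -> Prop.

Definition infinite_lang (U : eqType) (L : lang U) : Prop :=
  forall s : seq U, exists x, L x /\ x \notin s.

Section Scarcity.
Variables (R : realType) (U : countType) (K : nat) (grp : U -> 'I_K)
  (alpha : R) (L : nat -> lang U).
(* The groups A_g = {x | grp x = g}; entries of the collection are the
   indices i >= 1, L i = L_i. *)

Definition emp (T : {fset U}) (g : 'I_K) : R :=
  (#|` [fset x in T | grp x == g]|)%:R / (#|` T|)%:R.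

Definition capD (D : seq nat) (x : U) : Prop := forall d, d \in D -> L d x.

Definition scarceB (D : seq nat) (T : {fset U}) : {set 'I_K} :=
  [set g : 'I_K | `[< forall x, grp x = g -> capD D x -> x \in T >]].

Definition group_scarce (D : seq nat) (T : {fset U}) : Prop :=
  let B := scarceB D T in
  (exists g, g \in B /\ alpha < emp T g) \/
  (alpha * (K%:R - (#|B|)%:R) < \sum_(g in B) emp T g).

(* T is a candidate for the check on the ordered prefix p = (L'_1,...,L'_j)
   (a list of original indices; L'_j = last 0 p): T finite nonempty and there
   is a subcollection D of the entries of p including L'_j, with T contained in
   every language of D, and T suffering group scarcity w.r.t. D. *)
Definition cand (p : seq nat) (T : {fset U}) : Prop :=
  T != fset0 /\
  exists D : seq nat, {subset D <= p} /\ last 0%N p \in D /\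
    (forall d x, d \in D -> x \in T -> L d x) /\ group_scarce D T.

Definition is_mchk (p : seq nat) (m : nat) : Prop :=
  (forall T, cand p T -> (#|` T| <= m)%N) /\
  ((0 < m)%N -> exists T, cand p T /\ #|` T| = m).

(* A run of the Representative Procedure.
   ord t = C'_t (list of original indices), Tof i = T(L_i), Cof i = C(L_i),
   mof i = m*_alpha(L_i), pos i = final position j of L_i at iteration i.
   During iteration i, with o = ord (i-1), when L_i sits at position j the
   ordered prefix (L'_1..L'_j) is rcons (take (j-1) o) i, and L'_{j-1} is
   nth 0 o (j-2). *)
Definition is_run (ord : nat -> seq nat) (Tof : nat -> {fset U})
  (Cof : nat -> seq nat) (mof : nat -> nat) (pos : nat -> nat) : Prop :=
  ord 0%N = [::] /\
  forall i, (0 < i)%N ->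
    let o := ord i.-1 in
    let jf := pos i in
    (1 <= jf <= i)%N /\
    [/\ 
        (* non-stopping checks at positions j = i, i-1, ..., jf+1 *)
        (forall j, (jf < j <= i)%N -> exists m,
            is_mchk (rcons (take j.-1 o) i) m /\ (m <= mof (nth 0%N o j.-2))%N),
        (* stopping check at position jf *)
        is_mchk (rcons (take jf.-1 o) i) (mof i),
        ((jf <= 1)%N \/ (mof (nth 0%N o jf.-2) < mof i)%N),
        ((0 < mof i)%N ->
           [/\ Tof i != fset0, {subset Cof i <= rcons (take jf.-1 o) i},
               i \in Cof i,
               (forall d x, d \in Cof i -> x \in Tof i -> L d x) &
               group_scarce (Cof i) (Tof i) /\ #|` Tof i| = mof i]) &
        ord i = take jf.-1 o ++ i :: drop jf.-1 o].

End Scarcity.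

From HB Require Import structures.
From mathcomp Require Import all_boot all_order all_algebra.
From mathcomp Require Import finmap.
From mathcomp Require Import boolp reals.
From mathcomp Require Import zify.
Set Implicit Arguments. Unset Strict Implicit. Unset Printing Implicit Defensive.
Import Order.TTheory GRing.Theory Num.Theory.
Local Open Scope ring_scope.
Local Open Scope fset_scope.

(* Once L_i stops at some position, later iterations insert new
   languages either after L_i, which leaves the prefix ending in L_i unchanged,
   or before it. In the latter case a candidate T for the enlarged prefix either
   avoids the new language L_t, and is then a candidate for the old prefix, or
   uses it, and is then a candidate for the prefix checked when L_t passed L_i
   during iteration t; since L_t did not stop there, |T| <= m*(L_i). So
   m*(L_i) keeps bounding every candidate for the prefix ending in L_i, and it
   is attained by T(L_i). *)

Definition insert_at {T : Type} (n : nat) (x : T) (s : seq T) : seq T :=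
  take n s ++ x :: drop n s.

Lemma mem_insert_at (T : eqType) n (x y : T) s :
  (y \in insert_at n x s) = (y == x) || (y \in s).
Proof. by rewrite mem_cat in_cons orbCA -mem_cat cat_take_drop. Qed.

Lemma size_insert_at (T : Type) n (x : T) s :
  size (insert_at n x s) = (size s).+1.
Proof. by rewrite size_cat /= addnS -size_cat cat_take_drop. Qed.

Lemma insert_at_catl (T : Type) n (x : T) s1 s2 : (n <= size s1)%N ->
  insert_at n x (s1 ++ s2) = insert_at n x s1 ++ s2.
Proof.
move=> le_n_s1; rewrite /insert_at takel_cat // -{2}(cat_take_drop n s1) -catA.
by rewrite drop_size_cat ?size_takel // -catA.
Qed.

Lemma insert_at_catr (T : Type) n (x y : T) s1 s2 :
  insert_at (size s1 + n.+1) x (s1 ++ y :: s2) = s1 ++ y :: insert_at n x s2.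
Proof. by rewrite /insert_at take_cat drop_cat ltnNge leq_addr /= addKn -catA. Qed.

Lemma take_size_pivot (T : Type) (x : T) s1 s2 :
  take (size s1).+1 (s1 ++ x :: s2) = rcons s1 x.
Proof. by rewrite take_cat ltnNge leqnSn /= subSnn take_cons take0 cats1. Qed.

Lemma take_index_pivot (T : eqType) (x : T) s1 s2 : x \notin s1 ->
  take (index x (s1 ++ x :: s2)).+1 (s1 ++ x :: s2) = rcons s1 x.
Proof.
by move=> x_notin_s1; rewrite index_cat (negbTE x_notin_s1) /= eqxx addn0 take_size_pivot.
Qed.

Section Candidates.
Variables (R : realType) (U : countType) (K : nat) (grp : U -> 'I_K)
  (alpha : R) (L : nat -> lang U).

Local Notation candidate := (cand grp alpha L).

Lemma cand_sub p p' T : {subset p <= p'} -> last 0%N p' = last 0%N p ->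
  candidate p T -> candidate p' T.
Proof.
move=> sub_pp' last_p' [T_neq0 [D [sub_Dp [lastD [D_T scarce]]]]].
split=> //; exists D; split; first by move=> d /sub_Dp/sub_pp'.
by rewrite last_p'.
Qed.

Lemma cand_rcons_split p p' x T : {subset p' <= rcons p x} ->
  last 0%N p' = last 0%N p ->
  candidate p' T -> candidate p T \/ candidate (rcons p x) T.
Proof.
move=> sub_p' last_p' [T_neq0 [D [sub_Dp' [lastD [D_T scarce]]]]].
have [x_in_D|x_notin_D] := boolP (x \in D).
  right; split=> //; exists D; split; first by move=> d /sub_Dp'/sub_p'.
  by rewrite last_rcons.
left; split=> //; exists D; split; last by rewrite -last_p'.
move=> d d_in_D; move: (sub_p' _ (sub_Dp' _ d_in_D)).
rewrite mem_rcons in_cons => /predU1P[d_eq_x|//].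
by rewrite -d_eq_x d_in_D in x_notin_D.
Qed.

Definition cand_max (p : seq nat) (m : nat) (T0 : {fset U}) : Prop :=
  (forall T, candidate p T -> (#|` T| <= m)%N) /\
  ((0 < m)%N -> candidate p T0).

Lemma cand_max_insert u i x n m T0 :
  (forall T, candidate (rcons (rcons u i) x) T -> (#|` T| <= m)%N) ->
  cand_max (rcons u i) m T0 -> cand_max (rcons (insert_at n x u) i) m T0.
Proof.
move=> bound_x [bound_u cand_T0].
have sub_ins : {subset rcons (insert_at n x u) i <= rcons (rcons u i) x}.
  by move=> y; rewrite !(mem_rcons, in_cons) mem_insert_at orbCA.
have last_ins : last 0%N (rcons (insert_at n x u) i) = last 0%N (rcons u i).
  by rewrite !last_rcons.
split.
- move=> T /(cand_rcons_split sub_ins last_ins) [/bound_u|/bound_x] //.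
- move=> /cand_T0; apply: cand_sub => //.
  by move=> y; rewrite !(mem_rcons, in_cons) mem_insert_at => /predU1P[->|->];
    rewrite ?eqxx ?orbT.
Qed.

Lemma cand_max_card p m T0 : cand_max p m T0 -> ((0 < m)%N -> #|` T0| = m) ->
  (forall T, candidate p T -> (#|` T| <= #|` T0|)%N) /\
  ((exists T, candidate p T) -> candidate p T0).
Proof.
move=> [bound cand_T0] card_T0.
have m_gt0 T : candidate p T -> (0 < m)%N.
  by move=> candT; apply: leq_trans (bound T candT); rewrite cardfs_gt0; case: candT.
split; last by move=> [T /m_gt0/cand_T0].
by move=> T candT; rewrite card_T0; [exact: bound | exact: m_gt0 candT].
Qed.

End Candidates.

Section Run.
Variables (R : realType) (U : countType) (K : nat) (grp : U -> 'I_K)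
  (alpha : R) (L : nat -> lang U) (ord : nat -> seq nat)
  (Tof : nat -> {fset U}) (Cof : nat -> seq nat) (mof : nat -> nat)
  (pos : nat -> nat).
Hypothesis run : is_run grp alpha L ord Tof Cof mof pos.

Lemma ord0_nil : ord 0 = [::].
Proof. by case: run. Qed.

Lemma ordS_insert t : ord t.+1 = insert_at (pos t.+1).-1 t.+1 (ord t).
Proof. by case: run => _ /(_ t.+1 isT) [_ []]. Qed.

Lemma mem_ord_leq t y : y \in ord t -> (y <= t)%N.
Proof.
elim: t y => [|t IHt] y; first by rewrite ord0_nil.
by rewrite ordS_insert mem_insert_at => /predU1P[->//|/IHt]; lia.
Qed.

Lemma size_ord t : size (ord t) = t.
Proof. by elim: t => [|t IHt]; rewrite ?ord0_nil // ordS_insert size_insert_at IHt. Qed.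

Definition stopped_prefix (i t : nat) : Prop :=
  exists u v, [/\ ord t = u ++ i :: v, i \notin u &
    cand_max grp alpha L (rcons u i) (mof i) (Tof i)].

Lemma stopped_prefix_self i : (0 < i)%N -> stopped_prefix i i.
Proof.
case: run => _ /[apply] /= -[pos_bounds [_ stop _ stopT ord_i]].
set u := take (pos i).-1 (ord i.-1).
exists u, (drop (pos i).-1 (ord i.-1)); split=> //.
  by apply/negP => /mem_take /mem_ord_leq; lia.
split=> [T /(proj1 stop)//|/stopT [T_neq0 sub_C i_in_C C_T [scarce _]]].
by split=> //; exists (Cof i); rewrite last_rcons.
Qed.

(* The non-stopping check of iteration t.+1 at the position just after i is
   the one bounding the candidates that use the language t.+1. *)
Lemma stopped_prefix_step i t : (i <= t)%N ->
  stopped_prefix i t -> stopped_prefix i t.+1.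
Proof.
move=> le_i_t [u [v [ord_t i_notin_u max_u]]].
have size_t := size_ord t; rewrite ord_t size_cat /= in size_t.
case: run => _ /(_ t.+1 isT) /= [_ [passed _ _ _ _]].
rewrite /stopped_prefix ordS_insert ord_t.
have [le_n_u|lt_u_n] := leqP (pos t.+1).-1 (size u).
  exists (insert_at (pos t.+1).-1 t.+1 u), v; split.
  - by rewrite insert_at_catl.
  - by rewrite mem_insert_at negb_or i_notin_u andbT; lia.
  apply: cand_max_insert => // T candT.
  have [|m [[bound_m _] le_m_i]] := passed (size u).+2; first by apply/andP; lia.
  rewrite ord_t /= nth_cat ltnn subnn take_size_pivot in bound_m le_m_i.
  exact: leq_trans (bound_m _ candT) le_m_i.
have -> : (pos t.+1).-1 = (size u + ((pos t.+1).-1 - (size u).+1).+1)%N by lia.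
by rewrite insert_at_catr; eexists u, _.
Qed.

Lemma stopped_prefix_later i t : (1 <= i <= t)%N -> stopped_prefix i t.
Proof.
move=> /andP[i_gt0 le_i_t]; rewrite -(subnKC le_i_t).
elim: (t - i)%N => [|n IHn]; first by rewrite addn0; apply: stopped_prefix_self.
by rewrite addnS; apply: stopped_prefix_step; rewrite ?leq_addr.
Qed.

Lemma card_Tof i : (0 < i)%N -> (0 < mof i)%N -> #|` Tof i| = mof i.
Proof.
move=> i_gt0 m_gt0.
by case: run => _ /(_ i i_gt0) /= [_ [_ _ _ /(_ m_gt0) [_ _ _ _ []]]].
Qed.

End Run.

Theorem mainTheorem18 (R : realType) (U : countType)
  (HU : forall s : seq U, exists x : U, x \notin s)
  (L : nat -> lang U) (HL : forall i, (0 < i)%N -> infinite_lang (L i))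
  (K : nat) (grp : U -> 'I_K) (Hgrp : forall g : 'I_K, exists x, grp x = g)
  (alpha : R) (Halpha : 0 <= alpha <= 1)
  (ord : nat -> seq nat) (Tof : nat -> {fset U}) (Cof : nat -> seq nat)
  (mof : nat -> nat) (pos : nat -> nat)
  (Hrun : is_run grp alpha L ord Tof Cof mof pos) :
  forall i t, (1 <= i <= t)%N ->
    let k := (index i (ord t)).+1 in
    let p := take k (ord t) in
    (forall T, cand grp alpha L p T -> (#|` T| <= #|` Tof i|)%N) /\
    ((exists T, cand grp alpha L p T) -> cand grp alpha L p (Tof i)).
Proof.
move=> i t le_1_i_t.
have [u [v [ord_t i_notin_u max_u]]] := stopped_prefix_later Hrun le_1_i_t.
rewrite /= ord_t take_index_pivot //.
apply: (cand_max_card max_u); apply: (card_Tof Hrun).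
by case/andP: le_1_i_t.
Qed.
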